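(* Assume case (i) as in the context, and let $t_0(y)=f(Ay)\vee f(1+2/A)$ for a fixed $A>3\vee(B-1)$. Then, uniformly in $h>0$ and $y>g(h)$, \[ \int_{t_0(y)}^\infty\big(\bar\Pi(g(s+h)-y)-\bar\Pi(g(s))\big)ds\lesssim y\,f'(y)\,\bar\Pi(y). \]
   Context: $\Pi$ is the Lévy measure of a subordinator, $\bar\Pi(x)=\Pi((x,\infty))$. $f:[0,\infty)\to(0,\infty)$ is increasing with $f(0)\in(0,1)$, $f(t)\to\infty$, and $g=f^{-1}$ extended by $g(x)=0$ on $[0,f(0))$. $a\lesssim b$ means $a\le Cb$ for a constant $C\in(0,\infty)$. Case (i): $\bar\Pi$ regularly varying at $\infty$ (i.e. $\bar\Pi(\lambda t)/\bar\Pi(t)\to\lambda^{-\alpha}$ for all $\lambda>0$) with index $-\alpha\in(-1,0)$, $\bar\Pi(x)=x^{-\alpha}L(x)$ with $L$ slowly varying, and there exist $B,N>0$ such that $x\mapsto x^NL(x)$ is non-decreasing on $(B,\infty)$; $f$ is differentiable, $tf'(t)\bar\Pi(t)$ decreases to $0$, $g(t+\varepsilon)/g(t)\to1$ for all $\varepsilon>0$, and $t\bar\Pi(g(t)/\log(t)^\beta)\to0$ for some $\beta>(1+2\alpha)/(2\alpha+\alpha^2)$. *)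

From HB Require Import structures.
From mathcomp Require Import all_boot all_order all_algebra.
From mathcomp Require Import all_classical all_reals all_analysis.
Set Implicit Arguments. Unset Strict Implicit. Unset Printing Implicit Defensive.
Import Order.TTheory GRing.Theory Num.Theory.
Import numFieldNormedType.Exports.
Local Open Scope classical_set_scope.
Local Open Scope ring_scope.

Definition levy_measure_subordinator (R : realType)
  (Pi : {measure set R -> \bar R}) : Prop :=
  Pi [set x : R | x <= 0] = 0%E /\
  (\int[Pi]_(x in [set x : R | (0 < x)%R]) (Num.min 1%R x)%:E < +oo)%E.

(* tail function  Pibar x = Pi((x, oo)) (finite for x > 0 under the Levy condition) *)
Definition Pibar (R : realType) (Pi : {measure set R -> \bar R}) (x : R) : R :=
  fine (Pi [set y : R | x < y]).

Definition regularly_varying_index (R : realType) (F : R -> R) (alpha : R) : Prop :=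
  forall lam : R, 0 < lam ->
    (fun t => F (lam * t) / F t) @ +oo --> lam `^ (- alpha).

(* Put u_j = u0 + j y with u0 = max (A y) (1 + 2 / A) - y, so that t0(y) = f u_1,
   and cut [t0(y), oo) into the pieces [f u_(j+1), f u_(j+2)).  On the j-th piece
   g s lies in [u_(j+1), u_(j+2)), so the integrand is at most
   Pibar u_j - Pibar (u_j + 2 y), while the piece has length y f'(xi) for some
   xi > u_(j+1); since t f'(t) Pibar(t) is nonincreasing, Pibar (u_j + 2 y) times
   this length is at most y K / (u_j + y), where K = y f'(y) Pibar(y).  For u_j > B
   the monotonicity of x^N L(x) gives
   Pibar u_j <= (1 + 2 y / u_j)^(N + alpha) Pibar (u_j + 2 y), which bounds the j-th
   term by a multiple of y K (1 / u_j - 1 / u_(j+1)); for u_j <= B the positivity of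
   Pibar (2 B + 1) bounds it by a multiple of K (Pibar u_j - Pibar u_(j+2)).  Both
   bounds telescope. *)

From HB Require Import structures.
From mathcomp Require Import all_boot all_order all_algebra.
From mathcomp Require Import all_classical all_reals all_analysis.
From mathcomp Require Import lra ring measurable_realfun.
Set Implicit Arguments. Unset Strict Implicit. Unset Printing Implicit Defensive.
Import Order.TTheory GRing.Theory Num.Theory.
Import numFieldNormedType.Exports.
Local Open Scope classical_set_scope.
Local Open Scope ring_scope.

Section integral_bounds.
Local Open Scope ereal_scope.
Context d (T : measurableType d) (R : realType) (mu : {measure set T -> \bar R}).

Lemma ge0_le_integral_nonmeasurable (D : set T) (f1 f2 : T -> \bar R) :
  (forall x, D x -> 0 <= f1 x) -> (forall x, D x -> f1 x <= f2 x) ->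
  \int[mu]_(x in D) f1 x <= \int[mu]_(x in D) f2 x.
Proof.
move=> f10 f12.
have f20 x : D x -> 0 <= f2 x by move=> Dx; exact: le_trans (f10 x Dx) (f12 x Dx).
rewrite (ge0_integralE mu f10) (ge0_integralE mu f20).
apply: ereal_sup_le => _ [h hf1 <-]; exists h => //= x.
apply: le_trans (hf1 x) _; rewrite /patch; case: ifP => // /[1!inE]; exact: f12.
Qed.

Lemma integral_le_funepos (D : set T) (f : T -> \bar R) :
  \int[mu]_(x in D) f x <= \int[mu]_(x in D) f^\+ x.
Proof.
rewrite [leLHS]integralE -[leRHS]adde0 leeD // oppe_le0.
by apply: integral_ge0 => x _; exact: funeneg_ge0.
Qed.

(* phi need not be measurable: the integral is bounded through its positive part. *)
Lemma integral_le_cover (D : set T) (S : nat -> set T) (phi : T -> R)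
    (b l : nat -> R) (E : R) :
  measurable D -> (forall j, measurable (S j)) ->
  (forall j, (0 <= b j)%R) -> (forall j, mu (S j) <= (l j)%:E) ->
  (forall x, D x -> exists2 j, S j x & (phi x <= b j)%R) ->
  (forall n, (\sum_(j < n) b j * l j <= E)%R) ->
  \int[mu]_(x in D) (phi x)%:E <= E%:E.
Proof.
move=> mD mS b0 Sl cover sumE.
pose t j x := (b j)%:E * (\1_(S j) x)%:E.
have t0 j x : 0 <= t j x by apply: mule_ge0; rewrite lee_fin ?indic_ge0.
have mt j : measurable_fun D (fun x => t j x).
  apply: emeasurable_funM; first exact: measurable_cst.
  by apply/measurable_EFinP; exact: measurable_indic.
apply: le_trans (integral_le_funepos D (fun x => (phi x)%:E)) _.
apply: le_trans (ge0_le_integral_nonmeasurable (f2 := fun x => \sum_(j <oo) t j x) _ _) _.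
- by move=> x _; exact: funepos_ge0.
- move=> x Dx; have [j Sjx phib] := cover x Dx.
  rewrite funeposE ge_max nneseries_ge0 ?andbT; last by move=> n _ _; exact: t0.
  apply: le_trans (nneseries_lim_ge (m := 0%N) j.+1 (fun n _ _ => t0 n x)).
  rewrite big_nat_recr //= -[leLHS]add0e; apply: leeD; first exact: sume_ge0.
  by rewrite /t indicE mem_set // mule1 lee_fin.
rewrite integral_nneseries //.
have tl j : \int[mu]_(x in D) t j x <= ((b j * l j)%R)%:E.
  rewrite ge0_integralZl_EFin //; last by apply/measurable_EFinP; exact: measurable_indic.
  rewrite integral_indic // EFinM; apply: lee_pmul; rewrite ?lee_fin //.
  apply: le_trans (Sl j); apply: le_measure; rewrite ?inE; last by move=> x [].
  - exact: measurableI.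
  - exact: mS.
apply: le_trans (lee_nneseries (v := fun j => ((b j * l j)%R)%:E) _ _) _.
- by move=> n _ _; apply: integral_ge0 => x _; exact: t0.
- by move=> n _; exact: tl.
apply: lime_le.
  apply: is_cvg_nneseries => n _ _.
  by rewrite lee_fin mulr_ge0 // -lee_fin (le_trans _ (Sl n)).
by apply: nearW => n; rewrite big_mkord sumEFin lee_fin.
Qed.

End integral_bounds.

Section levy_tail.
Context (R : realType) (Pi : {measure set R -> \bar R}).
Hypothesis levyPi : levy_measure_subordinator Pi.

Lemma measurable_gt (x : R) : measurable [set y : R | x < y].
Proof. by rewrite -set_itvoy; exact: measurable_itv. Qed.

Lemma Pibar_ge0 x : 0 <= Pibar Pi x.
Proof. exact/fine_ge0/measure_ge0. Qed.

Lemma levy_tail1_lt_pinfty : (Pi [set y : R | (1 < y)%R] < +oo)%E.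
Proof.
have [_ int_min_lt] := levyPi.
have -> : Pi [set y : R | 1 < y] =
    (\int[Pi]_(x in [set x : R | (0 < x)%R]) (\1_[set y : R | (1 < y)%R] x)%:E)%E.
  rewrite integral_indic; [congr (Pi _)|exact: measurable_gt..].
  by apply/seteqP; split => x /=; [move=> x1; split => //; lra|case].
apply: le_lt_trans int_min_lt; apply: ge0_le_integral_nonmeasurable => x /= x0.
  by rewrite lee_fin.
rewrite lee_fin indicE le_min; have [x1|x1] := ltP 1 x.
  by rewrite mem_set //= lexx ltW.
by rewrite memNset //= ?ltW //; lra.
Qed.

Lemma Pibar_le (x x' : R) : 1 <= x -> x <= x' -> Pibar Pi x' <= Pibar Pi x.
Proof.
move=> x1 xx'.
have sub a b : a <= b -> (Pi [set y | (b < y)%R] <= Pi [set y | (a < y)%R])%E.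
  move=> ab; apply: le_measure; rewrite ?inE; try exact: measurable_gt.
  by move=> z /= bz; exact: le_lt_trans ab bz.
have fin_gt z : 1 <= z -> Pi [set y | z < y] \is a fin_num.
  move=> z1; rewrite ge0_fin_numE //.
  exact: le_lt_trans (sub _ _ z1) levy_tail1_lt_pinfty.
by apply: fine_le; rewrite ?fin_gt ?(le_trans x1) ?sub.
Qed.

(* Otherwise Pibar (2 t) / Pibar t would eventually be 0 / 0 = 0, not 2 `^ (- alpha). *)
Lemma Pibar_gt0 (alpha X : R) : regularly_varying_index (Pibar Pi) alpha ->
  1 <= X -> 0 < Pibar Pi X.
Proof.
move=> rv X1; rewrite lt_neqAle Pibar_ge0 andbT; apply/negP => /eqP PX0.
have ratio0 : (fun t => Pibar Pi (2 * t) / Pibar Pi t) @ +oo --> (0 : R).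
  apply: cvg_near_cst; near=> t.
  have Xt : X <= t by near: t; apply: nbhs_pinfty_ge; exact: num_real.
  have Pt0 : Pibar Pi t = 0.
    by apply/eqP; rewrite eq_le Pibar_ge0 andbT PX0 Pibar_le.
  by rewrite Pt0 invr0 mulr0.
have := powR_gt0 (- alpha) (ltr0Sn R 1).
by rewrite (cvg_unique (@norm_hausdorff _ _) (rv 2 (ltr0Sn _ 1)) ratio0) ltxx.
Unshelve. all: by end_near.
Qed.

End levy_tail.

Lemma exprD1_le (R : realFieldType) (z : R) (n : nat) : 0 <= z <= 1 ->
  (1 + z) ^+ n <= 1 + z * (n%:R * 2 ^+ n).
Proof.
move=> /andP[z0 z1].
have sum_le : \sum_(i < n) (1 + z) ^+ i <= n%:R * 2 ^+ n.
  have -> : n%:R * 2 ^+ n = \sum_(i < n) (2 : R) ^+ n by rewrite sumr_const card_ord mulr_natl.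
  apply: ler_sum => i _.
  apply: le_trans (ler_weXn2l _ (ltnW (ltn_ord i))); last by rewrite ler1n.
  by apply: lerXn2r; rewrite ?nnegrE //; lra.
rewrite -lerBlDl subrX1 addrC addKr; exact: ler_wpM2l.
Qed.

Lemma powR1D_le (R : realType) (z r : R) (n : nat) : 0 <= z <= 1 -> r <= n%:R ->
  (1 + z) `^ r <= 1 + z * (n%:R * 2 ^+ n).
Proof.
move=> z01 rn; have /andP[z0 _] := z01.
apply: le_trans (ler_powR _ rn) _; first lra.
by rewrite powR_mulrn; [exact: exprD1_le|lra].
Qed.

Lemma telescope_sumr_ord (V : zmodType) (w : nat -> V) (m : nat) :
  \sum_(j < m) (w j - w j.+1) = w 0%N - w m.
Proof.
rewrite -(big_mkord xpredT (fun j => w j - w j.+1)).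
by rewrite (@telescope_sumr_eq _ 0 m (fun j => - w j)) // => [|j _]; rewrite opprK addrC.
Qed.

Lemma telescope2_sumr_ord (V : zmodType) (w : nat -> V) (m : nat) :
  \sum_(j < m) (w j - w j.+2) = w 0%N + w 1%N - w m - w m.+1.
Proof.
rewrite (eq_bigr (fun j : 'I_m => (w j - w j.+1) + (w j.+1 - w j.+2))); last first.
  by move=> j _; rewrite addrA subrK.
rewrite big_split /= !telescope_sumr_ord (telescope_sumr_ord (fun j => w j.+1)).
by rewrite addrACA addrA.
Qed.

Definition grid (R : realType) (u0 y : R) (j : nat) : R := u0 + j%:R * y.

Lemma gridS (R : realType) (u0 y : R) j : grid u0 y j.+1 = grid u0 y j + y.
Proof. by rewrite /grid -natr1 mulrDl mul1r addrA. Qed.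

Lemma grid_ge (R : realType) (u0 y : R) j : 0 <= y -> u0 <= grid u0 y j.
Proof. by move=> y0; rewrite /grid lerDl mulr_ge0. Qed.

Lemma grid_shift (R : realType) (u0 y : R) j : grid (u0 + y) y j = grid u0 y j.+1.
Proof. by rewrite gridS /grid addrAC. Qed.

Lemma grid_index (R : realType) (u0 y x : R) : 0 < y -> u0 <= x ->
  exists j : nat, grid u0 y j <= x < grid u0 y j.+1.
Proof.
move=> y0 u0x; set q := (x - u0) / y; exists (Num.truncn q).
have q0 : 0 <= q by apply: divr_ge0; lra.
have lo : (Num.truncn q)%:R * y <= x - u0 by rewrite -ler_pdivlMr // truncn_le q0.
have hi : x - u0 < (Num.truncn q).+1%:R * y by rewrite -ltr_pdivrMr // truncnS_gt.
rewrite /grid; apply/andP; split; lra.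
Qed.

Lemma grid_origin_bounds (R : realType) (A y v : R) :
  3 < A -> 0 < y -> A * y <= v -> 1 + 2 / A <= v -> 1 <= v - y /\ 2 * y <= v - y.
Proof.
move=> A3 y0 Ayv v_ge; split; last by nra.
set a := A^-1; have a0 : 0 < a by rewrite invr_gt0; lra.
have a3 : 3 * a < 1 by rewrite /a ltr_pdivrMr; lra.
have ya : y <= v * a by rewrite ler_pdivlMr; lra.
have v_ge2a : 1 + 2 * a <= v := v_ge.
have : 0 <= (v - (1 + 2 * a)) * (1 - a) by apply: mulr_ge0; lra.
have : 0 <= a * (1 - 2 * a) by apply: mulr_ge0; lra.
nra.
Qed.

Lemma lebesgue_measure_itv_co (R : realType) (a b : R) : a <= b ->
  lebesgue_measure `[a, b[%classic = (b - a)%:E.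
Proof.
move=> ab; rewrite lebesgue_measure_itv /= lte_fin.
by case: ltgtP ab => // -> _; rewrite subrr.
Qed.

Section increasing_inverse.
Context (R : realType) (f g : R -> R).
Hypothesis f_incr : {in `[0, +oo[ &, forall s t, s < t -> f s < f t}.
Hypothesis g_lt_f0 : forall x, 0 <= x < f 0 -> g x = 0.
Hypothesis fgK : forall x, f 0 <= x -> 0 <= g x /\ f (g x) = x.

Lemma f_lt s t : 0 <= s -> s < t -> f s < f t.
Proof. by move=> s0 st; apply: f_incr; rewrite ?in_itv /= ?andbT //; lra. Qed.

Lemma f_le s t : 0 <= s -> s <= t -> f s <= f t.
Proof.
move=> s0; rewrite le_eqVlt => /orP[/eqP -> //|st]; exact/ltW/f_lt.
Qed.

Lemma f_max a b : 0 <= a -> 0 <= b -> Num.max (f a) (f b) = f (Num.max a b).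
Proof.
move=> a0 b0; have [ab|ba] := leP a b; first by rewrite max_r // f_le.
by rewrite max_l // f_le // ltW.
Qed.

Lemma g_ge0 x : 0 <= x -> 0 <= g x.
Proof.
move=> x0; have [x_lt|x_ge] := ltP x (f 0); last exact: (fgK x_ge).1.
by rewrite g_lt_f0 // x0.
Qed.

Lemma fK u : 0 <= u -> g (f u) = u.
Proof.
move=> u0; have [gfu0 fgfu] := fgK (f_le (lexx 0) u0).
by case: (ltgtP (g (f u)) u) => // [/(f_lt gfu0)|/(f_lt u0)]; rewrite fgfu ltxx.
Qed.

Lemma g_le s s' : f 0 <= s -> s <= s' -> g s <= g s'.
Proof.
move=> f0s ss'; have [gs0 fgs] := fgK f0s; have [gs'0 fgs'] := fgK (le_trans f0s ss').
rewrite leNgt; apply/negP => gs'_lt.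
by have := f_lt gs'0 gs'_lt; rewrite fgs fgs' ltNge ss'.
Qed.

Lemma grid_cover (u0 y s : R) : 0 <= u0 -> 0 < y -> f (u0 + y) <= s ->
  exists j : nat, [/\ f (grid u0 y j.+1) <= s < f (grid u0 y j.+2),
                      grid u0 y j.+1 <= g s & g s < grid u0 y j.+2].
Proof.
move=> u00 y0 fs; have f0s : f 0 <= s by apply: le_trans fs; apply: f_le; lra.
have [_ fgs] := fgK f0s.
have u0y_le : u0 + y <= g s.
  rewrite -(fK (_ : 0 <= u0 + y)); last lra.
  by apply: g_le => //; apply: f_le; lra.
have [j] := grid_index y0 u0y_le.
rewrite !grid_shift => /andP[lo hi]; exists j; split => //.
have grid_ge0 : 0 <= grid u0 y j.+1 := le_trans u00 (grid_ge u0 j.+1 (ltW y0)).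
by apply/andP; split; rewrite -fgs; [exact: f_le|apply: f_lt; lra].
Qed.

End increasing_inverse.

Section tail_increments.
Context (R : realType) (P : R -> R).
Hypothesis P_ge0 : forall x, 0 <= P x.
Hypothesis P_le : forall x x', 1 <= x -> x <= x' -> P x' <= P x.

Lemma increment_le (f : R -> R) (y K p : R) :
  (forall t, 0 < t -> derivable f t 1) ->
  (forall t, y <= t -> t * derive1 f t * P t <= K) ->
  0 < y -> 1 <= p -> y <= p -> f p <= f (p + y) ->
  P (p + y) * (f (p + y) - f p) * p <= y * K.
Proof.
move=> f_der FK y0 p1 yp fpy.
have [xi /[!in_itv] /= /andP[pxi xipy] incr] : exists2 xi, xi \in `]p, p + y[ &
    f (p + y) - f p = derive1 f xi * (p + y - p).
  apply: MVT; first lra.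
    by move=> x /[!in_itv] /= /andP[px _]; rewrite derive1E; apply/derivableP/f_der; lra.
  by apply: derivable_within_continuous => x /[!in_itv] /= /andP[px _]; apply: f_der; lra.
rewrite addrAC subrr add0r in incr.
have df0 : 0 <= derive1 f xi by rewrite -(pmulr_lge0 _ y0) -incr subr_ge0.
have Pxi : P (p + y) <= P xi by apply: P_le; lra.
apply: le_trans (_ : P xi * (derive1 f xi * y) * xi <= _).
  rewrite incr; apply: ler_pM; rewrite ?mulr_ge0 //; try lra.
  by apply: ler_wpM2r => //; exact: mulr_ge0 (ltW y0).
rewrite (_ : _ * _ * xi = y * (xi * derive1 f xi * P xi)); last by ring.
by rewrite ler_wpM2l ?FK //; lra.
Qed.

Variables (B r : R) (n : nat).
Hypothesis B_gt0 : 0 < B.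
Hypothesis powRP_nondecr :
  {in `]B, +oo[ &, forall x x', x <= x' -> x `^ r * P x <= x' `^ r * P x'}.
Hypothesis r_le_n : r <= n%:R.

Lemma tail_drop_le (u d : R) : B < u -> 0 <= d <= u ->
  P u - P (u + d) <= d / u * (n%:R * 2 ^+ n) * P (u + d).
Proof.
move=> Bu /andP[d0 du]; have u0 : 0 < u := lt_trans B_gt0 Bu.
set z := d / u.
have z01 : 0 <= z <= 1.
  by apply/andP; split; [exact: divr_ge0 d0 (ltW u0)|rewrite /z ler_pdivrMr // mul1r].
have ud : u + d = u * (1 + z) by rewrite /z mulrDr mulr1 mulrCA divff ?mulr1 //; lra.
have Pu : P u <= (1 + z) `^ r * P (u + d).
  rewrite -(ler_pM2l (powR_gt0 r u0)) mulrA -powRM; try lra.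
  by rewrite -ud; apply: powRP_nondecr; rewrite ?in_itv /= ?andbT //; lra.
have := powR1D_le z01 r_le_n.
have := P_ge0 (u + d); nra.
Qed.

Hypothesis P2B1_gt0 : 0 < P (2 * B + 1).

Lemma drop_mul_increment_le (u y D K : R) :
  1 <= u -> 0 < y -> 2 * y <= u -> 0 <= D ->
  P (u + 2 * y) * D * (u + y) <= y * K ->
  (P u - P (u + 2 * y)) * D <=
    2 * (n%:R * 2 ^+ n) * y * K * (u^-1 - (u + y)^-1)
    + B / (2 * P (2 * B + 1)) * K * (P u - P (u + 2 * y)).
Proof.
move=> u1 y0 yu D0 PD.
set c := n%:R * 2 ^+ n; set PX := P (2 * B + 1); set w := u + 2 * y.
have B0 := B_gt0; have PX0 : 0 < PX := P2B1_gt0.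
have c0 : 0 <= c by rewrite mulr_ge0 ?exprn_ge0.
have drop0 : 0 <= P u - P w by rewrite subr_ge0 P_le // /w; lra.
have PwD0 : 0 <= P w * D := mulr_ge0 (P_ge0 w) D0.
have K0 : 0 <= K.
  by rewrite -(pmulr_rge0 _ y0); apply: le_trans PD; rewrite mulr_ge0 //; lra.
have inv_diff : u^-1 - (u + y)^-1 = y / (u * (u + y)).
  by field; apply/andP; split; apply/eqP; lra.
have first0 : 0 <= 2 * c * y * K * (u^-1 - (u + y)^-1).
  by rewrite inv_diff !mulr_ge0 ?invr_ge0 ?mulr_ge0 //; lra.
have second0 : 0 <= B / (2 * PX) * K * (P u - P w).
  by rewrite !mulr_ge0 ?invr_ge0 ?mulr_ge0 //; lra.
have [uB|Bu] := leP u B.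
- have PXw : PX <= P w by apply: P_le; rewrite /w; lra.
  have PXD : PX * D <= y * K.
    apply: le_trans PD; apply: le_trans (ler_wpM2r D0 PXw) _.
    by rewrite ler_peMr //; lra.
  have DK : D <= B / (2 * PX) * K.
    rewrite mulrAC ler_pdivlMr ?mulr_gt0 //; nra.
  by apply: le_trans (ler_wpM2l drop0 DK) _; rewrite mulrC; lra.
- have drop_le : P u - P w <= 2 * y / u * c * P w by apply: tail_drop_le; lra.
  have PwD : P w * D <= y * K / (u + y) by rewrite ler_pdivlMr //; lra.
  suff : (P u - P w) * D <= 2 * c * y * K * (u^-1 - (u + y)^-1) by lra.
  apply: le_trans (ler_wpM2r D0 drop_le) _.
  rewrite -/c (_ : _ * P w * D = 2 * y / u * c * (P w * D)); last by ring.
  apply: le_trans (ler_wpM2l _ PwD) _; first by rewrite !mulr_ge0 ?invr_ge0 //; lra.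
  rewrite inv_diff (_ : _ * (y * K / (u + y)) = 2 * c * y * K * (y / (u * (u + y)))) //.
  by field; apply/andP; split; apply/eqP; lra.
Qed.

Lemma sum_drop_mul_increment_le (f : R -> R) (u0 y K : R) (m : nat) :
  1 <= u0 -> 0 < y -> 2 * y <= u0 ->
  (forall p, u0 + y <= p ->
    0 <= f (p + y) - f p /\ P (p + y) * (f (p + y) - f p) * p <= y * K) ->
  \sum_(j < m) (P (grid u0 y j) - P (grid u0 y j.+2))
                * (f (grid u0 y j.+2) - f (grid u0 y j.+1))
    <= (n%:R * 2 ^+ n + B * P 1 / P (2 * B + 1)) * K.
Proof.
move=> u01 y0 yu0 incr.
set u := grid u0 y; set c := n%:R * 2 ^+ n; set PX := P (2 * B + 1).
have B0 := B_gt0; have PX0 : 0 < PX := P2B1_gt0.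
have u_ge j : u0 <= u j := grid_ge u0 j (ltW y0).
have uS j : u j.+1 = u j + y by rewrite /u gridS.
have [D0 PD] := incr _ (lexx (u0 + y)).
have K0 : 0 <= K.
  by rewrite -(pmulr_rge0 _ y0); apply: le_trans PD; rewrite !mulr_ge0 //; lra.
have c0 : 0 <= c by rewrite mulr_ge0 ?exprn_ge0.
have term j : (P (u j) - P (u j.+2)) * (f (u j.+2) - f (u j.+1)) <=
    2 * c * y * K * ((u j)^-1 - (u j.+1)^-1)
    + B / (2 * PX) * K * (P (u j) - P (u j.+2)).
  have [|Dj PDj] := incr (u j.+1); first by rewrite uS; have := u_ge j; lra.
  rewrite -uS in Dj PDj; set D := f (u j.+2) - f (u j.+1) in Dj PDj *.
  have uS2 : u j.+2 = u j + 2 * y by rewrite !uS; ring.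
  rewrite uS2 uS in PDj *.
  apply: drop_mul_increment_le => //; have := u_ge j; lra.
apply: le_trans; first by apply: ler_sum => j _; exact: term.
rewrite big_split /= -!mulr_sumr (telescope_sumr_ord (fun j => (u j)^-1)).
rewrite (telescope2_sumr_ord (fun j => P (u j))) /=.
have u00 : u 0%N = u0 by rewrite /u /grid mul0r addr0.
have inv_le : 2 * c * y * K * ((u 0%N)^-1 - (u m)^-1) <= c * K.
  have um0 : 0 <= (u m)^-1 by rewrite invr_ge0; have := u_ge m; lra.
  have first_le : 2 * c * y * K * u0^-1 <= c * K.
    rewrite (_ : _ * u0^-1 = c * K * (2 * y / u0)); last by ring.
    by rewrite -[leRHS]mulr1 ler_wpM2l ?mulr_ge0 // ler_pdivrMr ?mul1r //; lra.
  have : 0 <= 2 * c * y * K * (u m)^-1 by rewrite !mulr_ge0 //; lra.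
  rewrite u00 mulrBr; lra.
have P_le1 j : P (u j) <= P 1 by apply: P_le; have := u_ge j; lra.
have tail_le : B / (2 * PX) * K * (P (u 0%N) + P (u 1%N) - P (u m) - P (u m.+1))
    <= B * P 1 / PX * K.
  have BK0 : 0 <= B / (2 * PX) * K by rewrite !mulr_ge0 ?invr_ge0 //; lra.
  apply: le_trans (ler_wpM2l BK0 (_ : _ <= 2 * P 1)) _.
    by have := P_le1 0%N; have := P_le1 1%N; have := P_ge0 (u m); have := P_ge0 (u m.+1); lra.
  by rewrite (_ : _ * (2 * P 1) = B * P 1 / PX * K) //; field; lra.
rewrite mulrDl; lra.
Qed.

Variables (f g : R -> R).
Hypothesis f_incr : {in `[0, +oo[ &, forall s t, s < t -> f s < f t}.
Hypothesis fgK : forall x, f 0 <= x -> 0 <= g x /\ f (g x) = x.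
Hypothesis f_der : forall t, 0 < t -> derivable f t 1.
Hypothesis derive_tail_nonincr : {in `]0, +oo[ &, forall s t, s <= t ->
  t * derive1 f t * P t <= s * derive1 f s * P s}.

Lemma integral_tail_diff_le (u0 y h : R) : 1 <= u0 -> 0 < y -> 2 * y <= u0 -> 0 <= h ->
  (\int[lebesgue_measure]_(s in `[f (u0 + y), +oo[) (P (g (s + h) - y) - P (g s))%:E
    <= ((n%:R * 2 ^+ n + B * P 1 / P (2 * B + 1)) * (y * derive1 f y * P y))%:E)%E.
Proof.
move=> u01 y0 yu0 h0.
have u_ge j : 1 <= grid u0 y j := le_trans u01 (grid_ge u0 j (ltW y0)).
apply: (@integral_le_cover _ _ _ lebesgue_measure _
  (fun j => `[f (grid u0 y j.+1), f (grid u0 y j.+2)[%classic) _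
  (fun j => P (grid u0 y j) - P (grid u0 y j.+2))
  (fun j => f (grid u0 y j.+2) - f (grid u0 y j.+1))).
- exact: measurable_itv.
- by move=> j; exact: measurable_itv.
- by move=> j; rewrite subr_ge0 P_le // !gridS; lra.
- move=> j /=; rewrite lebesgue_measure_itv_co // (f_le f_incr) //.
    by have := u_ge j.+1; lra.
  by rewrite (gridS u0 y j.+1); lra.
- move=> s /=; rewrite in_itv /= andbT => fs.
  have [|j [Sjs lo hi]] := grid_cover f_incr fgK _ y0 fs; first lra.
  exists j; first by rewrite /= in_itv.
  have gs_le : g s <= g (s + h).
    by apply: (g_le f_incr fgK); [apply: le_trans fs; apply: (f_le f_incr)|]; lra.
  have P2 := P_le (le_trans (u_ge j.+1) lo) (ltW hi).
  have P1 : P (g (s + h) - y) <= P (grid u0 y j).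
    by apply: P_le; [exact: u_ge|rewrite gridS in lo; lra].
  lra.
- move=> m; apply: sum_drop_mul_increment_le => // p p_ge.
  have fp : f p <= f (p + y) by apply: (f_le f_incr); lra.
  split; first by rewrite subr_ge0.
  apply: increment_le => //; try lra.
  by move=> t yt; apply: derive_tail_nonincr; rewrite ?in_itv /= ?andbT //; lra.
Qed.

End tail_increments.

Theorem lemma3 (R : realType) (Pi : {measure set R -> \bar R})
  (alpha B N beta A : R) (f g : R -> R) :
  levy_measure_subordinator Pi ->
  (* case (i): regular variation of Pibar with index -alpha in (-1,0) *)
  0 < alpha < 1 ->
  regularly_varying_index (Pibar Pi) alpha ->
  (* L(x) = x^alpha Pibar(x);  x |-> x^N L(x) non-decreasing on (B, oo) *)
  0 < B -> 0 < N ->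
  {in `]B, +oo[ &, forall x y, x <= y ->
      x `^ N * (x `^ alpha * Pibar Pi x) <= y `^ N * (y `^ alpha * Pibar Pi y)} ->
  (* f : [0,oo) -> (0,oo) increasing, f(0) in (0,1), f(t) -> oo *)
  {in `[0, +oo[ &, forall s t, s < t -> f s < f t} ->
  0 < f 0 < 1 ->
  f @ +oo --> +oo ->
  (* g = f^{-1} on [f 0, oo), extended by 0 on [0, f 0) *)
  (forall x, 0 <= x < f 0 -> g x = 0) ->
  (forall x, f 0 <= x -> 0 <= g x /\ f (g x) = x) ->
  (* f differentiable *)
  (forall t, 0 < t -> derivable f t 1) ->
  (* t f'(t) Pibar(t) decreases to 0 *)
  {in `]0, +oo[ &, forall s t, s <= t ->
      t * derive1 f t * Pibar Pi t <= s * derive1 f s * Pibar Pi s} ->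
  (fun t => t * derive1 f t * Pibar Pi t) @ +oo --> (0:R) ->
  (* g(t + eps)/g(t) -> 1 *)
  (forall eps, 0 < eps -> (fun t => g (t + eps) / g t) @ +oo --> (1:R)) ->
  (* t Pibar(g(t)/log(t)^beta) -> 0 for some beta > (1+2 alpha)/(2 alpha + alpha^2) *)
  (1 + 2 * alpha) / (2 * alpha + alpha ^+ 2) < beta ->
  (fun t => t * Pibar Pi (g t / (ln t) `^ beta)) @ +oo --> (0:R) ->
  (* fixed A > 3 \/ (B - 1) *)
  Num.max 3 (B - 1) < A ->
  exists C : R, 0 < C /\
    forall h y : R, 0 < h -> g h < y ->
      (\int[lebesgue_measure]_(s in `[(Num.max (f (A * y)) (f (1 + 2 / A)))%R, +oo[)
          (Pibar Pi (g (s + h) - y) - Pibar Pi (g s))%:E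
        <= (C * (y * derive1 f y * Pibar Pi y))%:E)%E.
Proof.
move=> levyPi _ rv B_gt0 _ LN_nondecr f_incr _ _ g_lt_f0 fgK f_der derive_tail_nonincr
  _ _ _ _ A_gt.
have A_gt3 : 3 < A by move: A_gt; rewrite gt_max => /andP[].
pose n := (Num.truncn (N + alpha)).+1.
have powRP_nondecr : {in `]B, +oo[ &, forall x x', x <= x' ->
    x `^ (N + alpha) * Pibar Pi x <= x' `^ (N + alpha) * Pibar Pi x'}.
  have powRD_pos z : B < z -> z `^ (N + alpha) = z `^ N * z `^ alpha.
    by move=> Bz; apply: powRD; apply/implyP => _; rewrite gt_eqF //; lra.
  move=> x x' xB x'B xx'; move: (xB) (x'B); rewrite !in_itv /= !andbT => Bx Bx'.
  by rewrite !powRD_pos // -!mulrA LN_nondecr.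
have PX_gt0 : 0 < Pibar Pi (2 * B + 1) by apply: (Pibar_gt0 levyPi rv); lra.
exists (n%:R * 2 ^+ n + B * Pibar Pi 1 / Pibar Pi (2 * B + 1)); split.
  by rewrite ltr_wpDr ?divr_ge0 ?mulr_ge0 ?Pibar_ge0 ?mulr_gt0 ?exprn_gt0 // ltW.
move=> h y h_gt0 gh_lt_y.
have y_gt0 : 0 < y := le_lt_trans (g_ge0 g_lt_f0 fgK (ltW h_gt0)) gh_lt_y.
set v := Num.max (A * y) (1 + 2 / A).
have [v_ge1 yv] : 1 <= v - y /\ 2 * y <= v - y.
  by apply: (grid_origin_bounds A_gt3 y_gt0); rewrite le_max lexx ?orbT.
have Ay_ge0 : 0 <= A * y by rewrite mulr_ge0 //; lra.
have A2_ge0 : 0 <= 1 + 2 / A by rewrite addr_ge0 ?divr_ge0 //; lra.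
rewrite (f_max f_incr Ay_ge0 A2_ge0) -/v -[v](subrK y).
apply: (integral_tail_diff_le (Pibar_ge0 Pi) (Pibar_le levyPi) B_gt0 powRP_nondecr) => //.
  exact/ltW/truncnS_gt.
exact: ltW.
Qed.
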